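(* Let $\mathcal A$ be an ordered normed algebra with unit $e$ whose algebra cone $\mathcal A^+$ is normal with normality constant $\alpha$. Let $a,b\in\mathcal A$, with at least one of $a$ and $b$ positive, and suppose that for some $\varepsilon>0$ there exists $x\in\mathcal A$ with $\|x\|\leq\varepsilon$ such that $ab-ba\geq e+x$. Then $$\|a\|\cdot\|b\|\geq \frac{1}{2\alpha}\ln\frac{1}{\alpha\varepsilon}.$$ In particular, if the norm on $\mathcal A$ is monotone, then $\|a\|\cdot\|b\|\geq \frac12\ln\frac1\varepsilon$.
   Context: A normed algebra $\mathcal A$ (real or complex, with submultiplicative norm) with unit $e$. A cone is a nonempty subset $\mathcal A^+\subseteq\mathcal A$ with $\mathcal A^++\mathcal A^+\subseteq\mathcal A^+$, $\lambda\mathcal A^+\subseteq\mathcal A^+$ for all $\lambda\geq 0$, and $\mathcal A^+\cap(-\mathcal A^+)=\{0\}$; it induces the partial order $a\leq b \iff b-a\in\mathcal A^+$. Elements of $\mathcal A^+$ are called positive. The cone is an algebra cone if $\mathcal A^+\cdot\mathcal A^+\subseteq\mathcal A^+$ and $e\in\mathcal A^+$; then $\mathcal A$ is called an ordered normed algebra. The cone is normal with normality constant $\alpha$ (necessarily $\alpha\ge 1$) if $0\leq x\leq y$ implies $\|x\|\leq\alpha\|y\|$. The norm is monotone if one can take $\alpha=1$. *)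

From HB Require Import structures.
From mathcomp Require Import all_boot all_order all_algebra.
From mathcomp Require Import reals exp.
Set Implicit Arguments. Unset Strict Implicit. Unset Printing Implicit Defensive.
Import Order.TTheory GRing.Theory Num.Theory.
Local Open Scope ring_scope.

Definition is_algebra_norm (R : realType) (A : algType R) (N : A -> R) : Prop :=
  (forall x : A, 0 <= N x) /\
  (forall x : A, N x = 0 -> x = 0) /\
  (N 0 = 0) /\
  (forall (k : R) (x : A), N (k *: x) = `|k| * N x) /\
  (forall x y : A, N (x + y) <= N x + N y) /\
  (forall x y : A, N (x * y) <= N x * N y).

Definition is_cone (R : realType) (A : algType R) (P : A -> Prop) : Prop :=
  (exists x, P x) /\
  (forall x y, P x -> P y -> P (x + y)) /\
  (forall (l : R) x, 0 <= l -> P x -> P (l *: x)) /\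
  (forall x, P x -> P (- x) -> x = 0).

Definition is_algebra_cone (R : realType) (A : algType R) (P : A -> Prop) : Prop :=
  is_cone P /\ (forall x y, P x -> P y -> P (x * y)) /\ P 1.

Definition cone_le (R : realType) (A : algType R) (P : A -> Prop) (a b : A) : Prop :=
  P (b - a).

Definition normal_cone (R : realType) (A : algType R) (P : A -> Prop)
  (N : A -> R) (alpha : R) : Prop :=
  forall x y : A, cone_le P 0 x -> cone_le P x y -> N x <= alpha * N y.

(* Let p be whichever of a, b is positive and q the other one, negated if
   needed, so that [p, q] >= 1 + x.  The Leibniz rule
   [p u, q] = p [u, q] + [p, q] u gives by induction
   [p^(n+1), q] >= (n+1) p^n + x_n with |x_n| <= (n+1) |p|^n eps, and
   normality of the cone turns this into
     (n+1) |p^n| <= K |p^(n+1)| + (n+1) alpha eps |p|^n,   K = 2 alpha |q|.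
   Weighted by K^n / (n+1)! these inequalities telescope: with c = K |p|,
     1 - alpha eps sum_(k<n) c^k/k! <= |p^n| K^n / n! <= c^n / n!,
   and letting n tend to infinity gives alpha eps e^c >= 1. *)

From HB Require Import structures.
From mathcomp Require Import all_boot all_order all_algebra.
From mathcomp Require Import reals topology normedtype sequences exp.
From mathcomp Require Import ring.

Set Implicit Arguments.
Unset Strict Implicit.
Unset Printing Implicit Defensive.

Import Order.TTheory GRing.Theory Num.Theory numFieldNormedType.Exports.
Local Open Scope classical_set_scope.
Local Open Scope ring_scope.

Section ExpLowerBound.
Variables (R : realType) (v : nat -> R) (s K d : R).
Hypothesis K_ge0 : 0 <= K.
Hypothesis v_rec : forall n, n.+1%:R * v n <= K * v n.+1 + n.+1%:R * d * s ^+ n.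

Lemma scaled_seq_step n :
  v n * K ^+ n / n`!%:R <=
  v n.+1 * K ^+ n.+1 / n.+1`!%:R + d * exp_coeff (s * K) n.
Proof.
have factV : n`!%:R^-1 = n.+1%:R * n.+1`!%:R^-1 :> R.
  by rewrite factS natrM invfM mulrA mulfV ?mul1r // pnatr_eq0.
set u := n.+1`!%:R^-1 in factV *.
have u_ge0 : 0 <= u by rewrite invr_ge0.
clearbody u.
have -> : v n * K ^+ n / n`!%:R = n.+1%:R * v n * (K ^+ n * u).
  by rewrite factV; ring.
have -> : v n.+1 * K ^+ n.+1 * u + d * exp_coeff (s * K) n =
    (K * v n.+1 + n.+1%:R * d * s ^+ n) * (K ^+ n * u).
  by rewrite /exp_coeff /= exprMn exprS factV; ring.
by apply: ler_wpM2r (v_rec n); rewrite mulr_ge0 ?exprn_ge0.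
Qed.

Lemma scaled_seq_ge n :
  v 0 - d * series (exp_coeff (s * K)) n <= v n * K ^+ n / n`!%:R.
Proof.
elim: n => [|n IH].
  by rewrite /series /= big_geq // mulr0 subr0 expr0 fact0 !divr1 mulr1.
rewrite seriesSr mulrDr opprD addrA lerBlDr.
exact: le_trans IH (scaled_seq_step n).
Qed.

Hypothesis v_le : forall n, v n.+1 <= s ^+ n.+1.
Hypothesis v0_ge1 : 1 <= v 0.

Lemma one_le_exp_coeff_series n :
  1 <= exp_coeff (s * K) n + d * series (exp_coeff (s * K)) n.
Proof.
case: n => [|n].
  by rewrite /exp_coeff /series /= big_geq // expr0 fact0 divr1 mulr0 addr0.
have v_ge :
    1 - d * series (exp_coeff (s * K)) n.+1 <= v n.+1 * K ^+ n.+1 / n.+1`!%:R.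
  by rewrite (le_trans _ (scaled_seq_ge n.+1)) ?lerD2r.
rewrite -lerBlDr (le_trans v_ge) // /exp_coeff /= exprMn.
by apply: ler_wpM2r; [rewrite invr_ge0 | apply: ler_wpM2r; rewrite ?exprn_ge0].
Qed.

Lemma one_le_mul_expR : 1 <= d * expR (s * K).
Proof.
have lim_sum : (fun n => exp_coeff (s * K) n + d * series (exp_coeff (s * K)) n)
    @ \oo --> 0 + d * expR (s * K).
  apply: cvgD; first exact: cvg_exp_coeff.
  by apply: cvgMr; exact: is_cvg_series_exp_coeff.
rewrite -[d * _]add0r; apply: (cvgr_to_ge lim_sum).
exact: nearW one_le_exp_coeff_series.
Qed.

End ExpLowerBound.

Lemma lnV_le (R : realType) (d c : R) :
  0 < d -> 1 <= d * expR c -> ln d^-1 <= c.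
Proof.
move=> d_gt0 dexp_ge1.
have dV_le : d^-1 <= expR c by rewrite -(ler_pM2l d_gt0) mulfV ?gt_eqF.
by rewrite -[leRHS]expRK ler_ln // posrE ?invr_gt0 ?expR_gt0.
Qed.

Lemma commutatorMl (A : ringType) (p u q : A) :
  p * u * q - q * (p * u) = p * (u * q - q * u) + (p * q - q * p) * u.
Proof. by rewrite mulrBr mulrBl !mulrA addrA subrK. Qed.

Lemma commutatorXS_decomp (A : ringType) (p q x y : A) n :
  p ^+ n.+2 * q - q * p ^+ n.+2
  - (p ^+ n.+1 *+ n.+2 + (p * y + x * p ^+ n.+1)) =
  p * (p ^+ n.+1 * q - q * p ^+ n.+1 - (p ^+ n *+ n.+1 + y))
  + (p * q - q * p - (1 + x)) * p ^+ n.+1.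
Proof.
rewrite [p ^+ n.+2]exprS commutatorMl.
rewrite [X in _ = X + _]mulrBr [X in _ = _ + X]mulrBl [p * (_ + y)]mulrDr.
rewrite mulrnAr -exprS [(1 + x) * _]mulrDl mul1r [RHS]addrACA -opprD.
by congr (_ - _); rewrite [RHS]addrACA [_ *+ n.+1 + _]addrC -mulrS.
Qed.

Section OrderedNormedAlgebra.
Variables (R : realType) (A : algType R) (N : A -> R) (P : A -> Prop).
Hypotheses (hN : is_algebra_norm N) (hP : is_algebra_cone P).

Let N_ge0 x : 0 <= N x.
Proof. by case: hN => ge0 _; exact: ge0. Qed.
Let N_eq0 x : N x = 0 -> x = 0.
Proof. by case: hN => _ [eq0 _]; exact: eq0. Qed.
Let NZ k x : N (k *: x) = `|k| * N x.
Proof. by case: hN => _ [_ [_ [Z _]]]; exact: Z. Qed.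
Let ND x y : N (x + y) <= N x + N y.
Proof. by case: hN => _ [_ [_ [_ [D _]]]]; exact: D. Qed.
Let NM x y : N (x * y) <= N x * N y.
Proof. by case: hN => _ [_ [_ [_ [_ M]]]]; exact: M. Qed.

Let P_add x y : P x -> P y -> P (x + y).
Proof. by case: hP => [[_ [D _]] _]; exact: D. Qed.
Let P_scale l x : 0 <= l -> P x -> P (l *: x).
Proof. by case: hP => [[_ [_ [Z _]]] _]; exact: Z. Qed.
Let P_mul x y : P x -> P y -> P (x * y).
Proof. by case: hP => _ [M _]; exact: M. Qed.
Let P1 : P 1. Proof. by case: hP => _ []. Qed.

Lemma cone0 : P 0.
Proof. by case: hP => [[[z Pz] _] _]; rewrite -(scale0r z); exact: P_scale. Qed.

Lemma coneX p n : P p -> P (p ^+ n).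
Proof.
by move=> Pp; elim: n => [|n IH]; rewrite ?expr0 // exprS; exact: P_mul.
Qed.

Lemma coneMn p n : P p -> P (p *+ n).
Proof. by move=> Pp; rewrite -scaler_nat; exact: P_scale. Qed.

Lemma normN x : N (- x) = N x.
Proof. by rewrite -scaleN1r NZ normrN1 mul1r. Qed.

Lemma normB x y : N (x - y) <= N x + N y.
Proof. by rewrite -(normN y) ND. Qed.

Lemma normMn x n : N (x *+ n) = n%:R * N x.
Proof. by rewrite -scaler_nat NZ normr_nat. Qed.

Lemma norm1_ge1 : 1 <= N 1.
Proof.
have N1_gt0 : 0 < N 1.
  by rewrite lt_def N_ge0 andbT; apply/eqP => /N_eq0/eqP; rewrite oner_eq0.
by rewrite -(ler_pM2l N1_gt0) mulr1 -{1}(mulr1 1) NM.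
Qed.

Lemma normX p n : N (p ^+ n.+1) <= N p ^+ n.+1.
Proof.
elim: n => [|n IH]; first by rewrite !expr1.
by rewrite exprS [_ ^+ n.+2]exprS (le_trans (NM _ _)) // ler_wpM2l.
Qed.

Variable alpha : R.
Hypothesis hnormal : normal_cone P N alpha.

Lemma normal_cone_ge1 : 1 <= alpha.
Proof.
have N1_le : N 1 <= alpha * N 1.
  by apply: hnormal; rewrite /cone_le ?subr0 ?subrr //; exact: cone0.
by rewrite -(ler_pM2r (lt_le_trans ltr01 norm1_ge1)) mul1r.
Qed.

Section PositiveCommutator.
Variables (p q x : A) (eps : R).
Hypotheses (Pp : P p) (Nx : N x <= eps).
Hypothesis pq_ge : cone_le P (1 + x) (p * q - q * p).

Lemma commutatorX_ge n : exists2 xn, N xn <= n.+1%:R * N p ^+ n * eps &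
  cone_le P (p ^+ n *+ n.+1 + xn) (p ^+ n.+1 * q - q * p ^+ n.+1).
Proof.
elim: n => [|n [xn Nxn xn_ge]].
  by exists x; rewrite ?expr0 ?mulr1 ?mul1r ?expr1 ?mulr1n.
exists (p * xn + x * p ^+ n.+1).
  have pxn_le : N (p * xn) <= N p * (n.+1%:R * N p ^+ n * eps).
    by rewrite (le_trans (NM _ _)) // ler_wpM2l.
  have xpn_le : N (x * p ^+ n.+1) <= eps * N p ^+ n.+1.
    by rewrite (le_trans (NM _ _)) // ler_pM // normX.
  have -> : n.+2%:R * N p ^+ n.+1 * eps =
      N p * (n.+1%:R * N p ^+ n * eps) + eps * N p ^+ n.+1.
    by rewrite exprS -addn1 natrD; ring.
  exact: le_trans (ND _ _) (lerD pxn_le xpn_le).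
rewrite /cone_le commutatorXS_decomp.
by apply: P_add; apply: P_mul => //; exact: coneX.
Qed.

Lemma norm_powers_rec n :
  n.+1%:R * N (p ^+ n) <=
  2 * alpha * N q * N (p ^+ n.+1) + n.+1%:R * (alpha * eps) * N p ^+ n.
Proof.
have [xn Nxn xn_ge] := commutatorX_ge n.
set C := p ^+ n.+1 * q - q * p ^+ n.+1 in xn_ge *.
have pn_ge0 : cone_le P 0 (p ^+ n *+ n.+1).
  by rewrite /cone_le subr0; apply: coneMn; exact: coneX.
have pn_le : cone_le P (p ^+ n *+ n.+1) (C - xn).
  by rewrite /cone_le -addrA -opprD [xn + _]addrC.
have := hnormal pn_ge0 pn_le; rewrite normMn => /le_trans; apply.
have C_le : N C <= N (p ^+ n.+1) * N q + N q * N (p ^+ n.+1).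
  by rewrite (le_trans (normB _ _)) // lerD.
have alpha_ge0 : 0 <= alpha := le_trans ler01 normal_cone_ge1.
have -> : 2 * alpha * N q * N (p ^+ n.+1) + n.+1%:R * (alpha * eps) * N p ^+ n =
    alpha * (N (p ^+ n.+1) * N q + N q * N (p ^+ n.+1)
             + n.+1%:R * N p ^+ n * eps).
  by ring.
exact: ler_wpM2l alpha_ge0 _ _ (le_trans (normB _ _) (lerD C_le Nxn)).
Qed.

Lemma positive_commutator_exp_bound :
  1 <= alpha * eps * expR (N p * (2 * alpha * N q)).
Proof.
apply: (@one_le_mul_expR _ (fun n => N (p ^+ n))) => [|n|n|].
- by rewrite !mulr_ge0 // (le_trans ler01 normal_cone_ge1).
- exact: norm_powers_rec.
- exact: normX.
- by rewrite expr0 norm1_ge1.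
Qed.

End PositiveCommutator.

Lemma commutator_exp_bound a b x eps : P a \/ P b -> N x <= eps ->
  cone_le P (1 + x) (a * b - b * a) ->
  1 <= alpha * eps * expR (2 * alpha * (N a * N b)).
Proof.
move=> [Pa|Pb] Nx ab_ge.
  by rewrite mulrCA; exact: positive_commutator_exp_bound ab_ge.
have ba_ge : cone_le P (1 + x) (b * - a - - a * b).
  by rewrite mulrN mulNr opprK [- (b * a) + _]addrC.
rewrite -(normN a) [N (- a) * _]mulrC mulrCA.
exact: positive_commutator_exp_bound ba_ge.
Qed.

End OrderedNormedAlgebra.

Theorem theorem2p4 (R : realType) (A : algType R) (N : A -> R) (P : A -> Prop)
  (alpha : R) (a b : A) (eps : R) (x : A) :
  is_algebra_norm N -> is_algebra_cone P -> normal_cone P N alpha ->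
  (P a \/ P b) -> 0 < eps -> N x <= eps ->
  cone_le P (1 + x) (a * b - b * a) ->
  N a * N b >= (2 * alpha)^-1 * ln (alpha * eps)^-1 /\
  (normal_cone P N 1 -> N a * N b >= 2^-1 * ln eps^-1).
Proof.
move=> hN hP hnormal ab_pos eps_gt0 Nx ab_ge.
have bound beta : normal_cone P N beta ->
    (2 * beta)^-1 * ln (beta * eps)^-1 <= N a * N b.
  move=> hbeta.
  have beta_gt0 := lt_le_trans ltr01 (normal_cone_ge1 hN hP hbeta).
  rewrite ler_pdivrMl ?mulr_gt0 //; apply: lnV_le; first exact: mulr_gt0.
  exact: (commutator_exp_bound hN hP hbeta ab_pos Nx ab_ge).
split; first exact: bound.
by move=> /bound; rewrite mulr1 mul1r.
Qed.
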